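(* Let $\alpha: I\to M$ be a unit-speed curve on an oriented surface $M\subset E^3$ with Darboux frame $\{T,V,U\}$ and curvatures $k_g,k_n,\tau_g$. Consider the curve $\gamma$ defined in either of the following two cases: (a) $\tau_g\equiv0$, $k_g$ and $k_n$ nowhere zero, and $\gamma(s)=\alpha(s)+\frac{1}{k_n(s)}U(s)$; (b) $\tau_g$ nowhere zero, $\lambda$ an antiderivative of $k_gk_n/\tau_g$, $\Lambda$ an antiderivative of $e^{-\lambda}$, $c_9$ a real constant, $y_1=e^{\lambda}(c_9-\Lambda)$, $y_3=\frac{k_g}{\tau_g}y_1$, and $\gamma(s)=\alpha(s)+y_1(s)T(s)+y_3(s)U(s)$. In either case assume $\gamma$ is regular. Then $\gamma$ is a general helix if and only if $\alpha$ is an isophote curve on $M$.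
   Context: $M$ is an oriented surface in Euclidean 3-space $E^3$ and $\alpha:I\to M$ is a unit-speed curve with arc-length parameter $s$. Its Darboux frame $\{T,V,U\}$ consists of the unit tangent $T=\alpha'$, the unit surface normal $U$ of $M$ along $\alpha$, and $V=U\times T$; it satisfies $T'=k_gV+k_nU$, $V'=-k_gT+\tau_gU$, $U'=-k_nT-\tau_gV$, where $k_g,k_n,\tau_g$ are the geodesic curvature, normal curvature and geodesic torsion. A regular curve is a general helix if its unit tangent makes a constant angle with a fixed direction. $\alpha$ is an isophote curve if $\langle U,l\rangle$ is constant for some fixed unit vector $l$. *)

From Stdlib Require Import Reals.
From Coquelicot Require Import Coquelicot.
Open Scope R_scope.

Record vec3 := V3 { vx : R; vy : R; vz : R }.

Definition vadd (a b : vec3) : vec3 := V3 (vx a + vx b) (vy a + vy b) (vz a + vz b).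
Definition vscale (r : R) (a : vec3) : vec3 := V3 (r * vx a) (r * vy a) (r * vz a).
Definition vdot (a b : vec3) : R := vx a * vx b + vy a * vy b + vz a * vz b.
Definition vnorm (a : vec3) : R := sqrt (vdot a a).
Definition vcross (a b : vec3) : vec3 :=
  V3 (vy a * vz b - vz a * vy b) (vz a * vx b - vx a * vz b) (vx a * vy b - vy a * vx b).
Definition vzero : vec3 := V3 0 0 0.

Definition is_vderive (f : R -> vec3) (s : R) (f' : vec3) : Prop :=
  is_derive (fun t => vx (f t)) s (vx f') /\
  is_derive (fun t => vy (f t)) s (vy f') /\
  is_derive (fun t => vz (f t)) s (vz f').

Definition inI (a b : Rbar) (s : R) : Prop := Rbar_lt a s /\ Rbar_lt s b.

(* {T,V,U} is the Darboux frame of the unit-speed curve alpha (arc length s)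
   with geodesic curvature kg, normal curvature kn, geodesic torsion tg;
   U is the unit surface normal along alpha, V = U x T. *)
Definition darboux_frame (a b : Rbar) (alpha T V U : R -> vec3)
  (kg kn tg : R -> R) : Prop :=
  forall s, inI a b s ->
    is_vderive alpha s (T s) /\
    vdot (T s) (T s) = 1 /\ vdot (U s) (U s) = 1 /\ vdot (T s) (U s) = 0 /\
    V s = vcross (U s) (T s) /\
    is_vderive T s (vadd (vscale (kg s) (V s)) (vscale (kn s) (U s))) /\
    is_vderive V s (vadd (vscale (- kg s) (T s)) (vscale (tg s) (U s))) /\
    is_vderive U s (vadd (vscale (- kn s) (T s)) (vscale (- tg s) (V s))) /\
    ex_derive kg s /\ ex_derive kn s /\ ex_derive tg s.

Definition regular_on (a b : Rbar) (g : R -> vec3) : Prop :=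
  forall s, inI a b s -> exists v, is_vderive g s v /\ v <> vzero.

Definition general_helix (a b : Rbar) (g : R -> vec3) : Prop :=
  exists (d : vec3) (c : R), vnorm d = 1 /\
    forall s v, inI a b s -> is_vderive g s v -> vdot (vscale (/ vnorm v) v) d = c.

Definition isophote (a b : Rbar) (U : R -> vec3) : Prop :=
  exists (l : vec3) (c : R), vnorm l = 1 /\ forall s, inI a b s -> vdot (U s) l = c.

Definition case_a (a b : Rbar) (alpha T V U : R -> vec3) (kg kn tg : R -> R)
  (g : R -> vec3) : Prop :=
  forall s, inI a b s ->
    tg s = 0 /\ kg s <> 0 /\ kn s <> 0 /\
    g s = vadd (alpha s) (vscale (/ kn s) (U s)).

Definition case_b (a b : Rbar) (alpha T V U : R -> vec3) (kg kn tg : R -> R)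
  (g : R -> vec3) : Prop :=
  exists (lam Lam : R -> R) (c9 : R),
    forall s, inI a b s ->
      tg s <> 0 /\
      is_derive lam s (kg s * kn s / tg s) /\
      is_derive Lam s (exp (- lam s)) /\
      let y1 := exp (lam s) * (c9 - Lam s) in
      let y3 := kg s / tg s * y1 in
      g s = vadd (alpha s) (vadd (vscale y1 (T s)) (vscale y3 (U s))).

From Stdlib Require Import Reals Lra Psatz.
From Coquelicot Require Import Coquelicot.
Open Scope R_scope.

(* In both cases the Darboux equations make the T- and V-components of the
   velocity of gamma cancel, so gamma' = w U with w <> 0 by regularity, and
   the unit tangent of gamma is sign(w) U.  If gamma is a helix with axis d,
   then <U, d> is continuous with constant square, hence constant by the
   intermediate value theorem.  Conversely, if <U, l> = c <> 0, then w c is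
   the derivative of <gamma, l>; it never vanishes, so by Darboux's theorem
   w has constant sign and the tangent makes a constant angle with l. *)

Lemma vec3_ext (u v : vec3) : vx u = vx v -> vy u = vy v -> vz u = vz v -> u = v.
Proof. destruct u, v; simpl; intros -> -> ->; reflexivity. Qed.

Lemma is_vderive_unique f s u v : is_vderive f s u -> is_vderive f s v -> u = v.
Proof.
  intros (Hx & Hy & Hz) (Gx & Gy & Gz); apply vec3_ext;
    [rewrite <- (is_derive_unique _ _ _ Hx) | rewrite <- (is_derive_unique _ _ _ Hy)
    | rewrite <- (is_derive_unique _ _ _ Hz)]; now apply is_derive_unique.
Qed.

Lemma is_vderive_ext_loc f g s u v :
  locally s (fun t => f t = g t) -> u = v -> is_vderive f s u -> is_vderive g s v.
Proof.
  intros Hfg <- (Hx & Hy & Hz); split; [|split]; eapply is_derive_ext_loc; try eassumption;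
    (eapply filter_imp; [|exact Hfg]); intros t ->; reflexivity.
Qed.

Lemma is_vderive_add f g s u v : is_vderive f s u -> is_vderive g s v ->
  is_vderive (fun t => vadd (f t) (g t)) s (vadd u v).
Proof.
  intros (Fx & Fy & Fz) (Gx & Gy & Gz); split; [|split];
    [exact (is_derive_plus _ _ _ _ _ Fx Gx) | exact (is_derive_plus _ _ _ _ _ Fy Gy)
    | exact (is_derive_plus _ _ _ _ _ Fz Gz)].
Qed.

Lemma is_vderive_scale (r : R -> R) f s r' v : is_derive r s r' -> is_vderive f s v ->
  is_vderive (fun t => vscale (r t) (f t)) s (vadd (vscale r' (f s)) (vscale (r s) v)).
Proof.
  intros Hr (Fx & Fy & Fz); split; [|split];
    [exact (Derive.is_derive_mult _ _ _ _ _ Hr Fx)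
    | exact (Derive.is_derive_mult _ _ _ _ _ Hr Fy) | exact (Derive.is_derive_mult _ _ _ _ _ Hr Fz)].
Qed.

Lemma is_derive_vdot_l f s v l : is_vderive f s v ->
  is_derive (fun t => vdot (f t) l) s (vdot v l).
Proof.
  intros (Fx & Fy & Fz).
  exact (is_derive_plus _ _ _ _ _ (is_derive_plus _ _ _ _ _
    (is_derive_scal_l _ _ _ (vx l) Fx) (is_derive_scal_l _ _ _ (vy l) Fy))
    (is_derive_scal_l _ _ _ (vz l) Fz)).
Qed.

Lemma Rabs_mult_sign x : Rabs x * sign x = x.
Proof.
  destruct (Rtotal_order x 0) as [Hx | [-> | Hx]].
  - rewrite Rabs_left, sign_eq_m1 by exact Hx; ring.
  - rewrite sign_0; ring.
  - rewrite Rabs_right, sign_eq_1 by lra; ring.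
Qed.

Lemma sign_sqr x : x <> 0 -> sign x * sign x = 1.
Proof.
  intros Hx; destruct (Rtotal_order x 0) as [Hlt | [-> | Hgt]]; [| easy |].
  - rewrite sign_eq_m1 by exact Hlt; ring.
  - rewrite sign_eq_1 by exact Hgt; ring.
Qed.

Lemma sign_eq_of_mult_pos x y : 0 < x * y -> sign x = sign y.
Proof.
  intros Hxy; destruct (Rtotal_order x 0) as [Hx | [Hx | Hx]].
  - rewrite !sign_eq_m1 by nra; reflexivity.
  - subst; lra.
  - rewrite !sign_eq_1 by nra; reflexivity.
Qed.

Lemma vdot_unit_scale u d w : vdot u u = 1 -> w <> 0 ->
  vdot (vscale (/ vnorm (vscale w u)) (vscale w u)) d = sign w * vdot u d.
Proof.
  intros Hu Hw.
  assert (Hnorm : vnorm (vscale w u) = Rabs w).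
  { unfold vnorm; rewrite <- sqrt_Rsqr_abs; f_equal.
    unfold Rsqr, vdot in *; simpl; rewrite <- (Rmult_1_r (w * w)), <- Hu; ring. }
  assert (Hsign : / Rabs w * w = sign w).
  { rewrite <- (Rabs_mult_sign w) at 2; field; now apply Rabs_no_R0. }
  rewrite Hnorm, <- Hsign; unfold vdot; simpl; ring.
Qed.

Lemma inI_nonempty a b : Rbar_lt a b -> exists s, inI a b s.
Proof.
  unfold inI; destruct a as [a| |], b as [b| |]; simpl; try easy; intros Hab.
  - exists ((a + b) / 2); simpl; lra.
  - exists (a + 1); simpl; lra.
  - exists (b - 1); simpl; lra.
  - exists 0; simpl; easy.
Qed.

Lemma inI_locally a b s : inI a b s -> locally s (inI a b).
Proof. exact (open_and _ _ (open_Rbar_gt a) (open_Rbar_lt b) s). Qed.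

Lemma inI_between a b x y z : inI a b x -> inI a b y -> x <= z <= y -> inI a b z.
Proof. unfold inI; destruct a, b; simpl; intros; lra. Qed.

Lemma continuous_nonzero_same_sign (h : R -> R) x y : x < y ->
  (forall z, x <= z <= y -> continuity_pt h z) -> (forall z, x <= z <= y -> h z <> 0) ->
  0 < h x * h y.
Proof.
  intros Hxy Hc Hnz.
  destruct (Rlt_or_le 0 (h x * h y)) as [|Hle]; [assumption | exfalso].
  assert (Hx := Hnz x ltac:(lra)); assert (Hy := Hnz y ltac:(lra)).
  destruct (Rlt_or_le (h x) 0) as [Hneg | Hpos].
  - destruct (Ranalysis5.IVT_interv h x y Hc Hxy Hneg ltac:(nra)) as (z & Hz & Hz0).
    exact (Hnz z Hz Hz0).
  - assert (Hc' : forall z, x <= z <= y -> continuity_pt (fun t => - h t) z)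
      by (intros z Hz; now apply continuity_pt_opp, Hc).
    destruct (Ranalysis5.IVT_interv _ x y Hc' Hxy ltac:(nra) ltac:(nra)) as (z & Hz & Hz0).
    apply (Hnz z Hz); lra.
Qed.

Lemma is_derive_sign_near (G : R -> R) x l : is_derive G x l -> l <> 0 ->
  exists d : posreal, forall h, h <> 0 -> Rabs h < d -> 0 < (G (x + h) - G x) * h * l.
Proof.
  intros HG Hl; apply is_derive_Reals in HG.
  destruct (HG (Rabs l) (Rabs_pos_lt _ Hl)) as [d Hd]; exists d; intros h Hh0 Hh.
  specialize (Hd h Hh0 Hh); set (q := (G (x + h) - G x) / h) in Hd.
  replace (G (x + h) - G x) with (q * h) by (unfold q; field; exact Hh0).
  assert (Hql : 0 < q * l).
  { apply Rabs_def2 in Hd; destruct (Rcase_abs l) as [Hneg | Hpos];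
      [rewrite Rabs_left in Hd | rewrite Rabs_right in Hd]; nra. }
  assert (0 < h * h) by nra; nra.
Qed.

Lemma exists_pos_lt_le p q : 0 < p -> 0 < q -> exists h, 0 < h < p /\ h <= q.
Proof.
  intros Hp Hq; exists (Rmin (p / 2) q); repeat split.
  - apply Rmin_glb_lt; lra.
  - apply (Rle_lt_trans _ (p / 2)); [apply Rmin_l | lra].
  - apply Rmin_r.
Qed.

(* Darboux's theorem; the root is an interior maximum of [G]. *)
Lemma derive_sign_change_root (G : R -> R) x y : x < y ->
  (forall z, x <= z <= y -> ex_derive G z) -> 0 < Derive G x -> Derive G y < 0 ->
  exists z, x < z < y /\ Derive G z = 0.
Proof.
  intros Hxy HG Hx Hy.
  assert (Hc : forall z, x <= z <= y -> continuity_pt G z)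
    by (intros z Hz; apply continuity_pt_filterlim, (ex_derive_continuous G), HG, Hz).
  destruct (continuity_ab_maj G x y (Rlt_le _ _ Hxy) Hc) as (M & HM & HMxy).
  destruct (is_derive_sign_near G x _ (Derive_correct _ _ (HG x ltac:(lra))) ltac:(lra))
    as [dx Hdx].
  destruct (is_derive_sign_near G y _ (Derive_correct _ _ (HG y ltac:(lra))) ltac:(lra))
    as [dy Hdy].
  assert (HMx : M <> x).
  { intros ->; destruct (exists_pos_lt_le dx (y - x) (cond_pos dx) ltac:(lra)) as (h & Hh & ?).
    specialize (Hdx h ltac:(lra) ltac:(rewrite Rabs_right; lra)).
    specialize (HM (x + h) ltac:(lra)).
    assert (0 < h * Derive G x) by nra; nra. }
  assert (HMy : M <> y).
  { intros ->; destruct (exists_pos_lt_le dy (y - x) (cond_pos dy) ltac:(lra)) as (h & Hh & ?).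
    specialize (Hdy (- h) ltac:(lra) ltac:(rewrite Rabs_left; lra)).
    specialize (HM (y + - h) ltac:(lra)).
    assert (0 < h * - Derive G y) by nra; nra. }
  exists M; split; [lra|].
  assert (pr : derivable_pt G M)
    by (exists (Derive G M); apply is_derive_Reals, Derive_correct, HG; lra).
  rewrite <- (Derive_Reals G M pr).
  apply (deriv_maximum G x y M pr); [lra | lra | intros z Hz1 Hz2; apply HM; lra].
Qed.

Lemma derive_nonzero_same_sign (G : R -> R) x y : x < y ->
  (forall z, x <= z <= y -> ex_derive G z /\ Derive G z <> 0) ->
  0 < Derive G x * Derive G y.
Proof.
  intros Hxy HG.
  destruct (Rlt_or_le 0 (Derive G x * Derive G y)) as [|Hle]; [assumption | exfalso].
  assert (Hx := proj2 (HG x ltac:(lra))); assert (Hy := proj2 (HG y ltac:(lra))).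
  destruct (Rlt_or_le 0 (Derive G x)) as [Hpos | Hneg].
  - destruct (derive_sign_change_root G x y Hxy (fun z Hz => proj1 (HG z Hz)) Hpos ltac:(nra))
      as (z & Hz & Hz0).
    exact (proj2 (HG z ltac:(lra)) Hz0).
  - assert (HG' : forall z, x <= z <= y -> ex_derive (fun t => - G t) z)
      by (intros z Hz; exact (ex_derive_opp G z (proj1 (HG z Hz)))).
    destruct (derive_sign_change_root _ x y Hxy HG') as (z & Hz & Hz0);
      rewrite ?Derive_opp in *; try nra.
    apply (proj2 (HG z ltac:(lra))); lra.
Qed.

Section OpenInterval.
Variables a b : Rbar.

Lemma same_sign_on_interval (h : R -> R) :
  (forall s, inI a b s -> h s <> 0) ->
  (forall x y, x < y -> (forall z, x <= z <= y -> inI a b z) -> 0 < h x * h y) ->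
  forall s s0, inI a b s -> inI a b s0 -> 0 < h s * h s0.
Proof.
  intros Hnz Hseg s s0 Hs Hs0.
  destruct (Rtotal_order s s0) as [Hlt | [<- | Hgt]].
  - apply Hseg; [exact Hlt | intros z; apply inI_between; assumption].
  - specialize (Hnz s Hs); nra.
  - rewrite Rmult_comm; apply Hseg; [exact Hgt | intros z; apply inI_between; assumption].
Qed.

Lemma continuous_const_sqr_eq (f : R -> R) c :
  (forall s, inI a b s -> continuity_pt f s) -> (forall s, inI a b s -> f s * f s = c * c) ->
  forall s s0, inI a b s -> inI a b s0 -> f s = f s0.
Proof.
  intros Hc Hsq s s0 Hs Hs0.
  assert (Es := Hsq s Hs); assert (Es0 := Hsq s0 Hs0).
  destruct (Req_dec c 0) as [-> | Hc0].
  { assert (f s = 0) by nra; assert (f s0 = 0) by nra; congruence. }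
  assert (Hnz : forall z, inI a b z -> f z <> 0)
    by (intros z Hz Hz0; specialize (Hsq z Hz); rewrite Hz0 in Hsq; nra).
  assert (0 < f s * f s0).
  { apply same_sign_on_interval; try assumption.
    intros x y Hxy Hseg; apply continuous_nonzero_same_sign; auto. }
  assert (E : (f s - f s0) * (f s + f s0) = 0) by nra.
  apply Rmult_integral in E as [E | E]; nra.
Qed.

Lemma derive_nonzero_same_sign_on_interval (G : R -> R) :
  (forall s, inI a b s -> ex_derive G s /\ Derive G s <> 0) ->
  forall s s0, inI a b s -> inI a b s0 -> 0 < Derive G s * Derive G s0.
Proof.
  intros HG; apply same_sign_on_interval; [intros s Hs; apply HG, Hs|].
  intros x y Hxy Hseg; apply derive_nonzero_same_sign; auto.
Qed.

End OpenInterval.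

Lemma regular_velocity_scale_neq0 a b g s w u :
  regular_on a b g -> inI a b s -> is_vderive g s (vscale w u) -> w <> 0.
Proof.
  intros Hreg Hs Hw ->; destruct (Hreg s Hs) as (v & Hv & Hv0); apply Hv0.
  rewrite (is_vderive_unique _ _ _ _ Hv Hw); apply vec3_ext; simpl; ring.
Qed.

Section DarbouxFrame.
Variables (a b : Rbar) (alpha T V U : R -> vec3) (kg kn tg : R -> R).
Hypothesis frame : darboux_frame a b alpha T V U kg kn tg.

(* The T- and V-components of the velocity of alpha + x T + y U are
   1 + x' - y kn and x kg - y tg. *)
Lemma offset_curve_velocity_normal (g : R -> vec3) (x y : R -> R) s x' y' :
  inI a b s -> is_derive x s x' -> is_derive y s y' ->
  (forall t, inI a b t ->
    g t = vadd (alpha t) (vadd (vscale (x t) (T t)) (vscale (y t) (U t)))) ->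
  1 + x' - y s * kn s = 0 -> x s * kg s - y s * tg s = 0 ->
  is_vderive g s (vscale (x s * kn s + y') (U s)).
Proof.
  intros Hs Hx Hy Hg HT0 HV0.
  destruct (frame s Hs) as (Halpha & _ & _ & _ & _ & HT & _ & HU & _).
  refine (is_vderive_ext_loc _ _ _ _ _ _ _ (is_vderive_add _ _ _ _ _ Halpha
    (is_vderive_add _ _ _ _ _ (is_vderive_scale _ _ _ _ _ Hx HT)
      (is_vderive_scale _ _ _ _ _ Hy HU)))).
  - eapply filter_imp; [|exact (inI_locally _ _ _ Hs)]; intros t Ht; symmetry; exact (Hg t Ht).
  - transitivity (vadd (vscale (1 + x' - y s * kn s) (T s))
      (vadd (vscale (x s * kg s - y s * tg s) (V s)) (vscale (x s * kn s + y') (U s)))).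
    + apply vec3_ext; simpl; ring.
    + rewrite HT0, HV0; apply vec3_ext; simpl; ring.
Qed.

Lemma case_a_velocity_normal g s : case_a a b alpha T V U kg kn tg g -> inI a b s ->
  exists w, is_vderive g s (vscale w (U s)).
Proof.
  intros Hg Hs.
  destruct (Hg s Hs) as (Htg & _ & Hkn & _).
  destruct (frame s Hs) as (_ & _ & _ & _ & _ & _ & _ & _ & _ & [dkn Hdkn] & _).
  eexists; apply (offset_curve_velocity_normal g (fun _ => 0) (fun t => / kn t) s 0 _ Hs
    (is_derive_const 0 s) (is_derive_inv _ _ _ Hdkn Hkn)).
  - intros t Ht; rewrite (proj2 (proj2 (proj2 (Hg t Ht)))); apply vec3_ext; simpl; ring.
  - field; exact Hkn.
  - rewrite Htg; ring.
Qed.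

Lemma case_b_velocity_normal g s : case_b a b alpha T V U kg kn tg g -> inI a b s ->
  exists w, is_vderive g s (vscale w (U s)).
Proof.
  intros (lam & Lam & c9 & Hg) Hs.
  destruct (Hg s Hs) as (Htg & Hlam & HLam & _).
  destruct (frame s Hs) as (_ & _ & _ & _ & _ & _ & _ & _ & [dkg Hkg] & _ & [dtg Hdtg]).
  set (y1 := fun t => exp (lam t) * (c9 - Lam t)).
  set (y3 := fun t => kg t / tg t * y1 t).
  assert (Hexp : exp (lam s) <> 0) by apply Rgt_not_eq, exp_pos.
  assert (Hy1 : is_derive y1 s (kg s * kn s / tg s * y1 s - 1)).
  { replace (kg s * kn s / tg s * y1 s - 1)
      with (kg s * kn s / tg s * exp (lam s) * (c9 - Lam s) + exp (lam s) * (0 - exp (- lam s)))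
      by (unfold y1; rewrite exp_Ropp; field; auto).
    apply (Derive.is_derive_mult (fun t => exp (lam t)) (fun t => c9 - Lam t)).
    - exact (is_derive_comp exp lam s _ _ (is_derive_exp _) Hlam).
    - exact (is_derive_minus _ _ _ _ _ (is_derive_const c9 s) HLam). }
  eexists; apply (offset_curve_velocity_normal g y1 y3 s _ _ Hs Hy1
    (Derive.is_derive_mult _ _ _ _ _ (is_derive_div _ _ _ _ _ Hkg Hdtg Htg) Hy1)).
  - intros t Ht; exact (proj2 (proj2 (proj2 (Hg t Ht)))).
  - unfold y3; field; exact Htg.
  - unfold y3; field; exact Htg.
Qed.

Lemma case_ab_velocity_normal g :
  (case_a a b alpha T V U kg kn tg g \/ case_b a b alpha T V U kg kn tg g) ->
  regular_on a b g ->
  forall s, inI a b s -> exists w, w <> 0 /\ is_vderive g s (vscale w (U s)).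
Proof.
  intros Hcase Hreg s Hs.
  assert (Hw : exists w, is_vderive g s (vscale w (U s)))
    by (destruct Hcase as [Ha | Hb];
        [exact (case_a_velocity_normal g s Ha Hs) | exact (case_b_velocity_normal g s Hb Hs)]).
  destruct Hw as [w Hw]; exists w; split; [|exact Hw].
  exact (regular_velocity_scale_neq0 _ _ _ _ _ _ Hreg Hs Hw).
Qed.

End DarbouxFrame.

Section NormalTangent.
Variables (a b : Rbar) (g U : R -> vec3).
Hypothesis interval_nonempty : Rbar_lt a b.
Hypothesis unit_normal : forall s, inI a b s -> vdot (U s) (U s) = 1.
Hypothesis velocity_normal :
  forall s, inI a b s -> exists w, w <> 0 /\ is_vderive g s (vscale w (U s)).

Lemma general_helix_isophote :
  (forall s, inI a b s -> exists U', is_vderive U s U') ->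
  general_helix a b g -> isophote a b U.
Proof.
  intros HU (d & c & Hd & Hhelix); exists d.
  set (f := fun s => vdot (U s) d).
  assert (Hcont : forall s, inI a b s -> continuity_pt f s).
  { intros s Hs; destruct (HU s Hs) as [U' HU'].
    apply derivable_continuous_pt; exists (vdot U' d).
    apply is_derive_Reals, is_derive_vdot_l, HU'. }
  assert (Hsq : forall s, inI a b s -> f s * f s = c * c).
  { intros s Hs; destruct (velocity_normal s Hs) as (w & Hw & Hg).
    rewrite <- (Hhelix s _ Hs Hg), vdot_unit_scale by auto.
    transitivity (sign w * sign w * (f s * f s)); [rewrite sign_sqr by exact Hw |]; unfold f; ring. }
  destruct (inI_nonempty _ _ interval_nonempty) as [s0 Hs0].
  exists (f s0); split; [exact Hd|].
  intros s Hs; exact (continuous_const_sqr_eq a b f c Hcont Hsq s s0 Hs Hs0).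
Qed.

Lemma isophote_general_helix : isophote a b U -> general_helix a b g.
Proof.
  intros (l & c & Hl & Hiso); exists l.
  set (G := fun t => vdot (g t) l).
  assert (HG : forall s w, inI a b s -> is_vderive g s (vscale w (U s)) -> is_derive G s (w * c)).
  { intros s w Hs Hw; rewrite <- (Hiso s Hs).
    replace (w * vdot (U s) l) with (vdot (vscale w (U s)) l) by (unfold vdot; simpl; ring).
    exact (is_derive_vdot_l _ _ _ l Hw). }
  destruct (inI_nonempty _ _ interval_nonempty) as [s0 Hs0].
  destruct (velocity_normal s0 Hs0) as (w0 & Hw0 & Hg0).
  exists (sign w0 * c); split; [exact Hl|].
  intros s v Hs Hv; destruct (velocity_normal s Hs) as (w & Hw & Hg).
  rewrite (is_vderive_unique _ _ _ _ Hv Hg), vdot_unit_scale, Hiso by auto.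
  destruct (Req_dec c 0) as [-> | Hc]; [ring|].
  assert (Hsign : 0 < Derive G s * Derive G s0).
  { apply (derive_nonzero_same_sign_on_interval a b); [|exact Hs|exact Hs0].
    intros z Hz; destruct (velocity_normal z Hz) as (wz & Hwz & Hgz).
    rewrite (is_derive_unique _ _ _ (HG z wz Hz Hgz)).
    split; [eexists; exact (HG z wz Hz Hgz) | now apply Rmult_integral_contrapositive]. }
  rewrite (is_derive_unique _ _ _ (HG s w Hs Hg)),
    (is_derive_unique _ _ _ (HG s0 w0 Hs0 Hg0)) in Hsign.
  rewrite (sign_eq_of_mult_pos w w0); [reflexivity|].
  assert (0 < c * c) by (apply Rsqr_pos_lt, Hc); nra.
Qed.

End NormalTangent.

Theorem theorem3p27 (a b : Rbar) (alpha T V U : R -> vec3) (kg kn tg : R -> R)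
  (g : R -> vec3) :
  Rbar_lt a b ->
  darboux_frame a b alpha T V U kg kn tg ->
  (case_a a b alpha T V U kg kn tg g \/ case_b a b alpha T V U kg kn tg g) ->
  regular_on a b g ->
  (general_helix a b g <-> isophote a b U).
Proof.
  intros Hab Hframe Hcase Hreg.
  assert (Hvel := case_ab_velocity_normal a b alpha T V U kg kn tg Hframe g Hcase Hreg).
  assert (Hunit : forall s, inI a b s -> vdot (U s) (U s) = 1)
    by (intros s Hs; apply (Hframe s Hs)).
  split.
  - apply general_helix_isophote; [assumption .. |].
    intros s Hs; destruct (Hframe s Hs) as (_ & _ & _ & _ & _ & _ & _ & HU & _).
    eexists; exact HU.
  - apply isophote_general_helix; assumption.
Qed.
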